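(* Let $(M,d)$ be a compact metric space, $\mu$ a probability measure on $M$, $k:M\times M\to[0,1]$ measurable, $M^s\subseteq M$ measurable, and $\rho>0$. For a bounded measurable $f:M\setminus M^s\to\mathbb{R}$ define $A_\mu f:M\setminus M^s\to\mathbb{R}$ by $$(A_\mu f)(x)=\frac{\int_{M\setminus M^s}k(x,y)f(y)\,d\mu(y)}{\rho+\int_M k(x,y)\,d\mu(y)}.$$ Then $\|A_\mu f\|_\infty\le\frac{1}{1+\rho}\|f\|_\infty$, where $\|g\|_\infty=\sup_{x\in M\setminus M^s}|g(x)|$. *)

From HB Require Import structures.
From mathcomp Require Import all_boot all_order all_algebra.
From mathcomp Require Import all_classical all_reals all_analysis.
Set Implicit Arguments. Unset Strict Implicit. Unset Printing Implicit Defensive.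
Import Order.TTheory GRing.Theory Num.Theory.
Local Open Scope classical_set_scope.
Local Open Scope ring_scope.

Notation borel M := (g_sigma_algebraType (@open M)).

Definition sup_norm {R : realType} {T : Type} (Ms : set T) (g : T -> R) : R :=
  sup [set `|g y| | y in ~` Ms].

Definition A_mu {R : realType} {d : measure_display} {T : measurableType d}
  (mu : {measure set T -> \bar R}) (k : T * T -> R) (Ms : set T) (rho : R)
  (f : T -> R) (x : T) : R :=
  Rintegral mu (~` Ms) (fun y => k (x, y) * f y) /
  (rho + Rintegral mu setT (fun y => k (x, y))).

(** The integrand of the numerator is dominated by [||f||_oo k(x, .)] on
    [M \ M^s], so the numerator is at most [||f||_oo b] with
    [b = int_M k(x, y) dmu(y)], and [0 <= b <= 1] because [k] takes values in
    [[0, 1]] and [mu] is a probability.  Since [t / (rho + t)] is nondecreasing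
    on [[0, +oo)], [b / (rho + b) <= 1 / (rho + 1)]. *)

From HB Require Import structures.
From mathcomp Require Import all_boot all_order all_algebra.
From mathcomp Require Import all_classical all_reals all_analysis.
From mathcomp Require Import lra measurable_realfun.
Import Order.TTheory GRing.Theory Num.Theory.
Local Open Scope classical_set_scope.
Local Open Scope ring_scope.

Lemma ler_div_addl (R : realFieldType) (r a b : R) :
  0 < r -> 0 <= a -> a <= b -> a / (r + a) <= b / (r + b).
Proof.
move=> r0 a0 ab.
rewrite ler_pdivrMr; last lra.
rewrite mulrAC ler_pdivlMr; last lra.
nra.
Qed.

Section sup_norm.
Context {R : realType} {T : Type} (Ms : set T).

Lemma sup_norm_ub {g : T -> R} {C : R} :
  (forall y, (~` Ms) y -> `|g y| <= C) ->
  forall y, (~` Ms) y -> `|g y| <= sup_norm Ms g.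
Proof.
move=> gC y Msy; apply: ub_le_sup; last by exists y.
by exists C => _ [z Msz <-]; exact: gC.
Qed.

Lemma sup_norm_eq0 (g : T -> R) : ~ ((~` Ms) !=set0) -> sup_norm Ms g = 0.
Proof.
move=> Ms_empty; rewrite /sup_norm (_ : [set _ | _ in _] = set0) ?sup0 //.
by apply/seteqP; split=> // z [y Msy _]; apply: Ms_empty; exists y.
Qed.

Lemma sup_norm_ge0 {g : T -> R} {C : R} :
  (forall y, (~` Ms) y -> `|g y| <= C) -> 0 <= sup_norm Ms g.
Proof.
move=> gC; have [[y Msy]|Ms_empty] := pselect ((~` Ms) !=set0).
  exact: le_trans (normr_ge0 (g y)) (sup_norm_ub gC y Msy).
by rewrite sup_norm_eq0.
Qed.

Lemma sup_norm_le (g : T -> R) (c : R) :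
  0 <= c -> (forall y, (~` Ms) y -> `|g y| <= c) -> sup_norm Ms g <= c.
Proof.
move=> c0 gc; have [[y Msy]|Ms_empty] := pselect ((~` Ms) !=set0).
  by apply: ge_sup; [exists `|g y|, y | move=> _ [z Msz <-]; exact: gc].
by rewrite sup_norm_eq0.
Qed.

End sup_norm.

Section bounded_integrals.
Context {d : measure_display} {T : measurableType d} {R : realType}.
Variable mu : {finite_measure set T -> \bar R}.

Lemma bounded_integrable {D : set T} {g : T -> R} (C : R) :
  measurable D -> measurable_fun D g -> (forall y, D y -> `|g y| <= C) ->
  mu.-integrable D (EFin \o g).
Proof.
move=> mD mg gC; apply: measurable_bounded_integrable => //.
  by rewrite ltey_eq fin_num_measure.
exists C; split; first exact: num_real.
by move=> c Cc y Dy; apply: le_trans (gC y Dy) (ltW Cc).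
Qed.

Lemma le_Rintegral_subset {A B : set T} {g : T -> R} (C : R) :
  measurable A -> measurable B -> A `<=` B -> measurable_fun B g ->
  (forall y, B y -> 0 <= g y <= C) ->
  \int[mu]_(y in A) g y <= \int[mu]_(y in B) g y.
Proof.
move=> mA mB AB mg g0C.
have gC y : B y -> `|g y| <= C.
  by move=> By; have /andP[g0 gC] := g0C y By; rewrite ger0_norm.
apply: fine_le.
- apply: integrable_fin_num => //; apply: (bounded_integrable C) => //.
    exact: measurable_funS mg.
  by move=> y /AB; exact: gC.
- by apply: integrable_fin_num => //; exact: (bounded_integrable C).
apply: ge0_subset_integral => //; first exact/measurable_EFinP.
by move=> y By; have /andP[g0 _] := g0C y By; rewrite lee_fin.
Qed.

Lemma Rintegral_le_measure {D : set T} {g : T -> R} :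
  measurable D -> measurable_fun D g -> (forall y, D y -> 0 <= g y <= 1) ->
  \int[mu]_(y in D) g y <= fine (mu D).
Proof.
move=> mD mg g01; rewrite -[fine _]mul1r -Rintegral_cst //.
apply: le_Rintegral => //.
- apply: (bounded_integrable 1) => // y Dy.
  by have /andP[g0 g1] := g01 y Dy; rewrite ger0_norm.
- by apply: (bounded_integrable 1) => // y _; rewrite normr1.
by move=> y Dy; have /andP[_ g1] := g01 y Dy.
Qed.

Lemma normr_Rintegral_weighted_le {D : set T} {w f : T -> R} (Cw S : R) :
  measurable D -> measurable_fun D w -> measurable_fun D f ->
  (forall y, D y -> 0 <= w y <= Cw) -> (forall y, D y -> `|f y| <= S) ->
  `|\int[mu]_(y in D) (w y * f y)| <= S * \int[mu]_(y in D) w y.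
Proof.
move=> mD mw mf w0C fS.
have wfS y : D y -> `|w y * f y| <= S * w y.
  move=> Dy; have /andP[w0 _] := w0C y Dy.
  by rewrite normrM ger0_norm // mulrC ler_wpM2r // fS.
have wfC y : D y -> `|w y * f y| <= Cw * S.
  move=> Dy; have /andP[w0 wC] := w0C y Dy.
  by rewrite normrM ger0_norm // ler_pM // fS.
have Sw_bound y : D y -> `|S * w y| <= S * Cw.
  move=> Dy; have /andP[w0 wC] := w0C y Dy.
  have S0 : 0 <= S := le_trans (normr_ge0 _) (fS y Dy).
  by rewrite ger0_norm ?mulr_ge0 // ler_wpM2l.
have mwf : measurable_fun D (fun y => w y * f y) by exact: measurable_funM.
rewrite -RintegralZl //; last first.
  apply: (bounded_integrable Cw) => // y Dy; have /andP[w0 wC] := w0C y Dy.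
  by rewrite ger0_norm.
apply: le_trans (le_normr_Rintegral mD (bounded_integrable _ mD mwf wfC)) _.
apply: (le_Rintegral mD _ _ wfS).
- apply: (bounded_integrable (Cw * S)) => //; first exact: measurableT_comp.
  by move=> y Dy; rewrite normr_id wfC.
- apply: (bounded_integrable (S * Cw) mD _ Sw_bound).
  by apply: measurable_funM => //; exact: measurable_cst.
Qed.

End bounded_integrals.

Section kernel_operator.
Context {d : measure_display} {T : measurableType d} {R : realType}.
Variables (mu : probability T R) (k : T * T -> R) (Ms : set T) (rho : R).
Hypotheses (mk : measurable_fun setT k) (k01 : forall p, 0 <= k p <= 1).
Hypotheses (mMs : measurable Ms) (rho_gt0 : 0 < rho).

Lemma kernel_mass_le1 (x : T) : \int[mu]_y k (x, y) <= 1.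
Proof.
apply: le_trans (Rintegral_le_measure mu measurableT (measurable_fun_pair2 x mk) _) _ => //.
by rewrite /= probability_setT.
Qed.

Lemma normr_A_mu_le (f : T -> R) (S : R) :
  0 <= S -> measurable_fun (~` Ms) f -> (forall y, (~` Ms) y -> `|f y| <= S) ->
  forall x, `|A_mu mu k Ms rho f x| <= (1 + rho)^-1 * S.
Proof.
move=> S0 mf fS x.
have mkx : measurable_fun setT (fun y => k (x, y)) := measurable_fun_pair2 x mk.
have mC : measurable (~` Ms) := measurableC mMs.
have mkxC : measurable_fun (~` Ms) (fun y => k (x, y)).
  exact: measurable_funS measurableT (@subsetT _ _) mkx.
set b := \int[mu]_y k (x, y).
have b0 : 0 <= b by apply: Rintegral_ge0 => y _; have /andP[] := k01 (x, y).
have b1 : b <= 1 := kernel_mass_le1 x.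
have num_le : `|\int[mu]_(y in ~` Ms) (k (x, y) * f y)| <= S * b.
  apply: le_trans (normr_Rintegral_weighted_le mu 1 S mC mkxC mf _ fS) _ => //.
  by rewrite ler_wpM2l //; apply: (le_Rintegral_subset mu 1).
have rhob_ge0 : 0 <= rho + b by rewrite addr_ge0 // ltW.
rewrite /A_mu normrM normfV (ger0_norm rhob_ge0).
have inv_ge0 : 0 <= (rho + b)^-1 by rewrite invr_ge0.
apply: le_trans (ler_wpM2r inv_ge0 num_le) _.
rewrite -mulrA mulrC ler_wpM2r //.
by rewrite -[leRHS]div1r [1 + rho]addrC; apply: ler_div_addl.
Qed.

End kernel_operator.

Theorem lemma2 (R : realType) (M : pseudoPMetricType R)
  (hM : hausdorff_space M) (cM : compact [set: M])
  (mu : probability (borel M) R)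
  (k : (borel M * borel M)%type -> R) (mk : measurable_fun setT k)
  (k01 : forall p, 0 <= k p <= 1)
  (Ms : set (borel M)) (mMs : measurable Ms)
  (rho : R) (hrho : 0 < rho)
  (f : borel M -> R) (mf : measurable_fun (~` Ms) f)
  (bf : exists C : R, forall y, (~` Ms) y -> `|f y| <= C) :
  sup_norm Ms (A_mu mu k Ms rho f) <= (1 + rho)^-1 * sup_norm Ms f.
Proof.
have [C fC] := bf.
have S0 : 0 <= sup_norm Ms f := sup_norm_ge0 Ms fC.
apply: sup_norm_le => [|x _]; first by rewrite mulr_ge0 // invr_ge0; lra.
apply: normr_A_mu_le => //; exact (sup_norm_ub Ms fC).
Qed.
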